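(* Let $V$ be a unitary irreducible lowest weight representation of $\hat{G}_{\Lambda,\Lambda_F}$ with lowest weight $h$. If $\dot I,\dot J$ are sequences and $\lambda_1,\lambda_2\in\{1,\dots,\Lambda_F\}$ satisfy $\dot I\lambda_1>\dot J\lambda_2$, then $h_{II}(\lambda_2;\dot J)-h_{II}(\lambda_1;\dot I)\ge0$ and $h_{III}(\dot J;\lambda_2)-h_{III}(\dot I;\lambda_1)\ge0$.
   Context: Fix positive integers $\Lambda,\Lambda_F$. A sequence $\dot I=i_1\cdots i_a$ is a finite, possibly empty, sequence of integers in $\{1,\dots,\Lambda\}$; $\#(\dot I)=a$, juxtaposition denotes concatenation, and $\delta^{\dot I}_{\dot J}$ is $1$ if $\dot I=\dot J$ and $0$ otherwise (similarly for integers). Let $\mathcal{T}_o$ be the complex vector space with basis the symbols $\bar\phi^{\lambda_1}\otimes s^{\dot K}\otimes\phi^{\lambda_2}$, $1\le\lambda_1,\lambda_2\le\Lambda_F$, $\dot K$ any sequence. For all sequences $\dot I,\dot J$ and all $\lambda_i\in\{1,\dots,\Lambda_F\}$ define linear operators on $\mathcal{T}_o$: first kind: $\bar\Xi^{\lambda_1}_{\lambda_2}\otimes f^{\dot I}_{\dot J}\otimes\Xi^{\lambda_3}_{\lambda_4}(\bar\phi^{\lambda_5}\otimes s^{\dot K}\otimes\phi^{\lambda_6})=\delta^{\lambda_5}_{\lambda_2}\delta^{\dot K}_{\dot J}\delta^{\lambda_6}_{\lambda_4}\,\bar\phi^{\lambda_1}\otimes s^{\dot I}\otimes\phi^{\lambda_3}$;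 second kind: $\bar\Xi^{\lambda_1}_{\lambda_2}\otimes l^{\dot I}_{\dot J}(\bar\phi^{\lambda_3}\otimes s^{\dot K}\otimes\phi^{\lambda_4})=\delta^{\lambda_3}_{\lambda_2}\sum_{\dot K_1\dot K_2=\dot K}\delta^{\dot K_1}_{\dot J}\,\bar\phi^{\lambda_1}\otimes s^{\dot I\dot K_2}\otimes\phi^{\lambda_4}$; third kind: $r^{\dot I}_{\dot J}\otimes\Xi^{\lambda_1}_{\lambda_2}(\bar\phi^{\lambda_3}\otimes s^{\dot K}\otimes\phi^{\lambda_4})=\delta^{\lambda_4}_{\lambda_2}\sum_{\dot K_1\dot K_2=\dot K}\delta^{\dot K_2}_{\dot J}\,\bar\phi^{\lambda_3}\otimes s^{\dot K_1\dot I}\otimes\phi^{\lambda_1}$; fourth kind: $\sigma^{\dot I}_{\dot J}(\bar\phi^{\lambda_1}\otimes s^{\dot K}\otimes\phi^{\lambda_2})=\sum_{\dot K_1\dot K_2\dot K_3=\dot K}\delta^{\dot K_2}_{\dot J}\,\bar\phi^{\lambda_1}\otimes s^{\dot K_1\dot I\dot K_3}\otimes\phi^{\lambda_2}$; sums over all ways to write $\dot K$ as a concatenation of possibly empty sequences. The open string algebra $\hat{G}_{\Lambda,\Lambda_F}$ is the Lie algebra (commutator bracket) of operators on $\mathcal{T}_o$ spanned by these operators. Ordering: for finite sequences of positive integers $a=a_1\cdots a_m$, $b=b_1\cdots b_n$, $a>b$ means $m>n$, or $m=n\ne0$ and $a_r>b_r$ at the first index $r$ where they differ (applied to concatenations like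 $\dot I\lambda_1$). $G^{00}$ is the span of all $\bar\Xi^{\lambda_1}_{\lambda_1}\otimes f^{\dot I}_{\dot I}\otimes\Xi^{\lambda_2}_{\lambda_2}$, $\bar\Xi^{\lambda}_{\lambda}\otimes l^{\dot I}_{\dot I}$, $r^{\dot I}_{\dot I}\otimes\Xi^{\lambda}_{\lambda}$, $\sigma^{\dot I}_{\dot I}$. $G^-$ is the span of all operators of the four kinds with $\#(\dot I)<\#(\dot J)$, together with those with $\#(\dot I)=\#(\dot J)$ and $\dot J\lambda_2\lambda_4>\dot I\lambda_1\lambda_3$ (first kind), $\dot J\lambda_2>\dot I\lambda_1$ (second and third kind), $\dot J>\dot I$ (fourth kind). $\omega$ is the antilinear anti-involution swapping upper and lower indices: $\omega(\bar\Xi^{\lambda_1}_{\lambda_2}\otimes f^{\dot I}_{\dot J}\otimes\Xi^{\lambda_3}_{\lambda_4})=\bar\Xi^{\lambda_2}_{\lambda_1}\otimes f^{\dot J}_{\dot I}\otimes\Xi^{\lambda_4}_{\lambda_3}$, $\omega(\bar\Xi^{\lambda_1}_{\lambda_2}\otimes l^{\dot I}_{\dot J})=\bar\Xi^{\lambda_2}_{\lambda_1}\otimes l^{\dot J}_{\dot I}$, $\omega(r^{\dot I}_{\dot J}\otimes\Xi^{\lambda_1}_{\lambda_2})=r^{\dot J}_{\dot I}\otimes\Xi^{\lambda_2}_{\lambda_1}$, $\omega(\sigma^{\dot I}_{\dot J})=\sigma^{\dot J}_{\dot I}$. A lowest weight $h$ is a linear functional on $G^{00}$ real on the spanning operators;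 $h_{II}(\lambda;\dot I)$ and $h_{III}(\dot I;\lambda)$ denote its values on $\bar\Xi^{\lambda}_{\lambda}\otimes l^{\dot I}_{\dot I}$ and $r^{\dot I}_{\dot I}\otimes\Xi^{\lambda}_{\lambda}$. A unitary lowest weight representation with lowest weight $h$ is a representation $V$ generated by a vector $v\ne0$ with $G^-v=0$ and $Hv=h(H)v$ for $H\in G^{00}$, carrying a positive definite Hermitian form with $\langle Xu,w\rangle=\langle u,\omega(X)w\rangle$ for all $X$. *)

From HB Require Import structures.
From mathcomp Require Import all_boot all_order all_algebra.
Set Implicit Arguments. Unset Strict Implicit. Unset Printing Implicit Defensive.
Import Order.TTheory GRing.Theory Num.Theory.
Local Open Scope ring_scope.

Definition valid_seq (Lam : nat) (s : seq nat) : bool :=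
  all (fun i => (1 <= i <= Lam)%N) s.
Definition valid_idx (LamF : nat) (l : nat) : bool := (1 <= l <= LamF)%N.

(* Basis element  bar-phi^a (x) s^K (x) phi^b  of T_o, encoded as ((a, K), b). *)
Definition basis := (nat * seq nat * nat)%type.
Definition valid_basis (Lam LamF : nat) (b : basis) : bool :=
  [&& valid_idx LamF b.1.1, valid_seq Lam b.1.2 & valid_idx LamF b.2].

Inductive gen : Type :=
| GF of nat & nat & seq nat & seq nat & nat & nat
    (* GF l1 l2 I_ J_ l3 l4 = barXi^{l1}_{l2} (x) f^I_J (x) Xi^{l3}_{l4} *)
| GL of nat & nat & seq nat & seq nat
    (* GL l1 l2 I_ J_ = barXi^{l1}_{l2} (x) l^I_J *)
| GR of seq nat & seq nat & nat & nat
    (* GR I_ J_ l1 l2 = r^I_J (x) Xi^{l1}_{l2} *)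
| GS of seq nat & seq nat.
    (* GS I_ J_ = sigma^I_J *)

Definition valid_gen (Lam LamF : nat) (X : gen) : bool :=
  match X with
  | GF l1 l2 I_ J_ l3 l4 => [&& valid_idx LamF l1, valid_idx LamF l2,
      valid_seq Lam I_, valid_seq Lam J_, valid_idx LamF l3 & valid_idx LamF l4]
  | GL l1 l2 I_ J_ => [&& valid_idx LamF l1, valid_idx LamF l2,
      valid_seq Lam I_ & valid_seq Lam J_]
  | GR I_ J_ l1 l2 => [&& valid_idx LamF l1, valid_idx LamF l2,
      valid_seq Lam I_ & valid_seq Lam J_]
  | GS I_ J_ => valid_seq Lam I_ && valid_seq Lam J_
  end.

Definition splits2 (K : seq nat) : seq (seq nat * seq nat) :=
  [seq (take i K, drop i K) | i <- iota 0 (size K).+1].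
Definition splits3 (K : seq nat) : seq (seq nat * seq nat * seq nat) :=
  [seq (take i K, take j (drop i K), drop j (drop i K))
    | i <- iota 0 (size K).+1, j <- iota 0 (size K - i).+1].

(* Action of a spanning operator on a basis vector, as the list (with
   multiplicity) of basis vectors in the image; all coefficients are 1. *)
Definition act (X : gen) (b : basis) : seq basis :=
  let: (a, K, c) := b in
  match X with
  | GF l1 l2 I_ J_ l3 l4 =>
      if [&& a == l2, K == J_ & c == l4] then [:: (l1, I_, l3)] else [::]
  | GL l1 l2 I_ J_ =>
      if a == l2 then [seq (l1, I_ ++ p.2, c) | p <- splits2 K & p.1 == J_]
      else [::]
  | GR I_ J_ l1 l2 =>
      if c == l2 then [seq (a, p.1 ++ I_, l1) | p <- splits2 K & p.2 == J_]
      else [::]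
  | GS I_ J_ =>
      [seq (a, p.1.1 ++ I_ ++ p.2, c) | p <- splits3 K & p.1.2 == J_]
  end.

(* Matrix coefficient <b'| sum_k c_k X_k |b> of a formal linear combination. *)
Definition lc_coef (C : numClosedFieldType) (lc : seq (C * gen)) (b' b : basis) : C :=
  \sum_(p <- lc) p.1 * (count_mem b' (act p.2 b))%:R.

Definition comm_coef (C : numClosedFieldType) (X Y : gen) (b' b : basis) : C :=
  (count_mem b' (flatten [seq act X d | d <- act Y b]))%:R
  - (count_mem b' (flatten [seq act Y d | d <- act X b]))%:R.

Fixpoint lex_gt (a b : seq nat) : bool :=
  match a, b with
  | x :: a', y :: b' => if x == y then lex_gt a' b' else (y < x)%N
  | _, _ => false
  end.
Definition seq_gt (a b : seq nat) : bool :=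
  (size b < size a)%N || [&& size a == size b, size a != 0%N & lex_gt a b].

Definition in_Gminus (X : gen) : bool :=
  match X with
  | GF l1 l2 I_ J_ l3 l4 => (size I_ < size J_)%N ||
      ((size I_ == size J_) && seq_gt (J_ ++ [:: l2; l4]) (I_ ++ [:: l1; l3]))
  | GL l1 l2 I_ J_ => (size I_ < size J_)%N ||
      ((size I_ == size J_) && seq_gt (rcons J_ l2) (rcons I_ l1))
  | GR I_ J_ l1 l2 => (size I_ < size J_)%N ||
      ((size I_ == size J_) && seq_gt (rcons J_ l2) (rcons I_ l1))
  | GS I_ J_ => (size I_ < size J_)%N || ((size I_ == size J_) && seq_gt J_ I_)
  end.

Definition in_G00 (X : gen) : bool :=
  match X with
  | GF l1 l2 I_ J_ l3 l4 => [&& l1 == l2, I_ == J_ & l3 == l4]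
  | GL l1 l2 I_ J_ => (l1 == l2) && (I_ == J_)
  | GR I_ J_ l1 l2 => (l1 == l2) && (I_ == J_)
  | GS I_ J_ => I_ == J_
  end.

(* The anti-involution omega on spanning operators (extended antilinearly). *)
Definition omega (X : gen) : gen :=
  match X with
  | GF l1 l2 I_ J_ l3 l4 => GF l2 l1 J_ I_ l4 l3
  | GL l1 l2 I_ J_ => GL l2 l1 J_ I_
  | GR I_ J_ l1 l2 => GR J_ I_ l2 l1
  | GS I_ J_ => GS J_ I_
  end.

Section Rep.
Variables (Lam LamF : nat) (C : numClosedFieldType) (V : lmodType C).
Variable rho : gen -> {linear V -> V}.

Definition rho_lc (lc : seq (C * gen)) (u : V) : V :=
  \sum_(p <- lc) p.1 *: rho p.2 u.

Definition valid_lc (lc : seq (C * gen)) : bool :=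
  all (fun p => valid_gen Lam LamF p.2) lc.

(* rho is (the restriction to the spanning operators of) a Lie algebra
   representation of hat G_{Lam,LamF}: it respects all linear relations among
   the operators on T_o, and maps commutators of operators to commutators. *)
Definition is_rep : Prop :=
  (forall lc, valid_lc lc ->
     (forall b b', valid_basis Lam LamF b -> lc_coef lc b' b = 0) ->
     forall u, rho_lc lc u = 0)
  /\
  (forall X Y lc, valid_gen Lam LamF X -> valid_gen Lam LamF Y -> valid_lc lc ->
     (forall b b', valid_basis Lam LamF b -> lc_coef lc b' b = comm_coef C X Y b' b) ->
     forall u, rho_lc lc u = rho X (rho Y u) - rho Y (rho X u)).

Definition invariant_subspace (S : V -> Prop) : Prop :=
  [/\ S 0, (forall u w, S u -> S w -> S (u + w)),
      (forall (a : C) u, S u -> S (a *: u)) &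
      (forall X u, valid_gen Lam LamF X -> S u -> S (rho X u))].

Definition irreducible : Prop :=
  forall S, invariant_subspace S -> (forall u, S u -> u = 0) \/ (forall u, S u).

(* V is a lowest weight representation with lowest weight vector v and lowest
   weight h (h is given on the spanning operators of G^00). *)
Definition lowest_weight (v : V) (h : gen -> C) : Prop :=
  [/\ v != 0,
      (forall S, invariant_subspace S -> S v -> forall u, S u),
      (forall X, valid_gen Lam LamF X -> in_Gminus X -> rho X v = 0),
      (forall H, valid_gen Lam LamF H -> in_G00 H -> rho H v = h H *: v) &
      (forall H, valid_gen Lam LamF H -> in_G00 H -> h H \is Num.real)].

Definition unitary_form (form : V -> V -> C) : Prop :=
  [/\ (forall (a : C) u u' w, form (a *: u + u') w = a * form u w + form u' w),
      (forall u w, form u w = (form w u)^*),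
      (forall u, u != 0 -> 0 < form u u) &
      (forall X u w, valid_gen Lam LamF X ->
         form (rho X u) w = form u (rho (omega X) w))].
End Rep.

(* The raising operator X = barXi^{l1}_{l2} (x) l^I_J has adjoint omega X =
   barXi^{l2}_{l1} (x) l^J_I in G^-, and composing two such operators only
   swaps the matched prefix, so [omega X, X] = barXi^{l2}_{l2} (x) l^J_J -
   barXi^{l1}_{l1} (x) l^I_I lies in G^00.  For the lowest weight vector v this
   gives |X v|^2 = <v, omega(X) X v> = (h_II(l2;J) - h_II(l1;I)) |v|^2, and
   positivity of the form yields the inequality.  The r-operators are the
   mirror image, matching suffixes instead of prefixes. *)
From Pilot Require Import Defs.
From HB Require Import structures.
From mathcomp Require Import all_boot all_order all_algebra.
Import Order.TTheory GRing.Theory Num.Theory.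
Local Open Scope ring_scope.

Lemma splits2_prefix (I s : seq nat) :
  [seq p <- splits2 (I ++ s) | p.1 == I] = [:: (I, s)].
Proof.
rewrite /splits2 filter_map size_cat.
rewrite (@eq_in_filter nat _ (pred1 (size I))) => [|i]; last first.
  rewrite mem_iota leq0n add0n ltnS -size_cat => le_i /=.
  apply/eqP/eqP => [eq_take|->].
    by rewrite -(size_takel le_i) eq_take.
  by rewrite take_size_cat.
rewrite filter_pred1_uniq ?iota_uniq ?mem_iota ?add0n ?ltnS ?leq_addr //.
by rewrite /= take_size_cat // drop_size_cat.
Qed.

Lemma splits2_suffix (I s : seq nat) :
  [seq p <- splits2 (s ++ I) | p.2 == I] = [:: (s, I)].
Proof.
rewrite /splits2 filter_map size_cat.
rewrite (@eq_in_filter nat _ (pred1 (size s))) => [|i]; last first.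
  rewrite mem_iota leq0n add0n ltnS -size_cat => le_i /=.
  apply/eqP/eqP => [eq_drop|->].
    by rewrite -(subKn le_i) -[(_ - i)%N]size_drop eq_drop size_cat addnK.
  by rewrite drop_size_cat.
rewrite filter_pred1_uniq ?iota_uniq ?mem_iota ?add0n ?ltnS ?leq_addr //.
by rewrite /= take_size_cat // drop_size_cat.
Qed.

Lemma act_GL_comp l1 l2 I J b :
  flatten [seq act (GL l2 l1 J I) d | d <- act (GL l1 l2 I J) b]
  = act (GL l2 l2 J J) b.
Proof.
case: b => [[a K] c].
rewrite [act (GL l1 l2 I J) _]/act [act (GL l2 l2 J J) _]/act.
case: (a == l2) => //.
elim: [seq p <- splits2 K | p.1 == J] => // p ps IH.
have act_GL_match : act (GL l2 l1 J I) (l1, I ++ p.2, c) = [:: (l2, J ++ p.2, c)].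
  by rewrite /act eqxx splits2_prefix.
by rewrite !map_cons act_GL_match -IH.
Qed.

Lemma act_GR_comp l1 l2 I J b :
  flatten [seq act (GR J I l2 l1) d | d <- act (GR I J l1 l2) b]
  = act (GR J J l2 l2) b.
Proof.
case: b => [[a K] c].
rewrite [act (GR I J l1 l2) _]/act [act (GR J J l2 l2) _]/act.
case: (c == l2) => //.
elim: [seq p <- splits2 K | p.2 == J] => // p ps IH.
have act_GR_match : act (GR J I l2 l1) (a, p.1 ++ I, l1) = [:: (a, p.1 ++ J, l2)].
  by rewrite /act eqxx splits2_suffix.
by rewrite !map_cons act_GR_match -IH.
Qed.

Lemma lc_coef_diff (C : numClosedFieldType) (A B : gen) (b' b : basis) :
  lc_coef [:: (1 : C, A); (-1, B)] b' b
  = (count_mem b' (act A b))%:R - (count_mem b' (act B b))%:R.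
Proof. by rewrite /lc_coef !big_cons big_nil /= mul1r mulN1r addr0. Qed.

(* Unqualified, [comm_coef] is the polynomial notion from [poly]. *)
Lemma comm_coef_GL (C : numClosedFieldType) l1 l2 I J (b' b : basis) :
  Defs.comm_coef C (GL l2 l1 J I) (GL l1 l2 I J) b' b
  = lc_coef [:: (1, GL l2 l2 J J); (-1, GL l1 l1 I I)] b' b.
Proof. by rewrite lc_coef_diff /Defs.comm_coef !act_GL_comp. Qed.

Lemma comm_coef_GR (C : numClosedFieldType) l1 l2 I J (b' b : basis) :
  Defs.comm_coef C (GR J I l2 l1) (GR I J l1 l2) b' b
  = lc_coef [:: (1, GR J J l2 l2); (-1, GR I I l1 l1)] b' b.
Proof. by rewrite lc_coef_diff /Defs.comm_coef !act_GR_comp. Qed.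

Lemma valid_gen_omega Lam LamF X :
  valid_gen Lam LamF (omega X) = valid_gen Lam LamF X.
Proof.
case: X => [l1 l2 I J l3 l4|l1 l2 I J|I J l1 l2|I J] /=; last exact: andbC.
all: case: (valid_idx LamF l1) (valid_idx LamF l2) (valid_seq Lam I)
       (valid_seq Lam J) => [] [] [] [] //=; exact: andbC.
Qed.

Lemma seq_gt_size {a b : seq nat} : seq_gt a b -> (size b <= size a)%N.
Proof. by case/orP => [/ltnW // | /and3P[/eqP-> _ _]]. Qed.

Lemma in_Gminus_GL_of_gt {l1 l2 : nat} {I J : seq nat} :
  seq_gt (rcons I l1) (rcons J l2) -> in_Gminus (GL l2 l1 J I).
Proof.
move=> gt_IJ; have := seq_gt_size gt_IJ; rewrite !size_rcons ltnS /= gt_IJ andbT.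
by rewrite leq_eqVlt eq_sym orbC.
Qed.

Lemma in_Gminus_GR_of_gt {l1 l2 : nat} {I J : seq nat} :
  seq_gt (rcons I l1) (rcons J l2) -> in_Gminus (GR J I l2 l1).
Proof. exact: in_Gminus_GL_of_gt. Qed.

Section HermitianForm.
Variables (C : numClosedFieldType) (V : lmodType C) (form : V -> V -> C).
Hypothesis formDZl :
  forall (a : C) u u' w, form (a *: u + u') w = a * form u w + form u' w.
Hypothesis form_conj : forall u w, form u w = (form w u)^*.

Lemma form0l w : form 0 w = 0.
Proof.
have := formDZl 1 0 0 w; rewrite scaler0 addr0 mul1r => /esym/eqP.
by rewrite -subr_eq0 addrK => /eqP.
Qed.

Lemma formZl (a : C) u w : form (a *: u) w = a * form u w.
Proof. by rewrite -[a *: u]addr0 formDZl form0l addr0. Qed.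

Lemma formZr (a : C) u w : form u (a *: w) = a^* * form u w.
Proof. by rewrite form_conj formZl rmorphM /= -form_conj. Qed.

Hypothesis form_gt0 : forall u, u != 0 -> 0 < form u u.

Lemma form_ge0 u : 0 <= form u u.
Proof.
by have [->|/form_gt0/ltW //] := eqVneq u 0; rewrite form0l.
Qed.

End HermitianForm.

Section UnitaryLowestWeight.
Variables (Lam LamF : nat) (C : numClosedFieldType) (V : lmodType C).
Variables (rho : gen -> {linear V -> V}) (form : V -> V -> C).
Variables (v : V) (h : gen -> C).
Hypothesis rep : is_rep Lam LamF rho.
Hypothesis lw : lowest_weight Lam LamF rho v h.
Hypothesis unitary : unitary_form Lam LamF rho form.

Variables (X H1 H2 : gen).
Hypothesis vX : valid_gen Lam LamF X.
Hypotheses (vH1 : valid_gen Lam LamF H1) (vH2 : valid_gen Lam LamF H2).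
Hypothesis omegaX_minus : in_Gminus (omega X).
Hypotheses (H1_00 : in_G00 H1) (H2_00 : in_G00 H2).
Hypothesis comm_omegaX_X : forall b b', valid_basis Lam LamF b ->
  lc_coef [:: (1, H1); (-1, H2)] b' b = Defs.comm_coef C (omega X) X b' b.

Lemma rho_omega_raise : rho (omega X) (rho X v) = (h H1 - h H2) *: v.
Proof.
case: rep => _ rho_comm; case: lw => _ _ rho_minus rho_00 _.
have vomegaX : valid_gen Lam LamF (omega X) by rewrite valid_gen_omega.
have v_lc : valid_lc Lam LamF [:: (1 : C, H1); (-1, H2)].
  by rewrite /valid_lc /= vH1 vH2.
have := rho_comm _ _ _ vomegaX vX v_lc comm_omegaX_X v.
rewrite (rho_minus _ vomegaX omegaX_minus) linear0 subr0 => <-.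
rewrite /rho_lc !big_cons big_nil /= !rho_00 //.
by rewrite addr0 scale1r scaleN1r scalerBl.
Qed.

Lemma weight_gap_ge0 : 0 <= h H1 - h H2.
Proof.
case: unitary => formDZl form_conj form_gt0 form_adj.
case: lw => v_neq0 _ _ _ h_real.
have gap_real : h H1 - h H2 \is Num.real by rewrite rpredB ?h_real.
have norm_raise : form (rho X v) (rho X v) = (h H1 - h H2) * form v v.
  by rewrite form_adj // rho_omega_raise formZr // conj_Creal.
rewrite -(pmulr_lge0 _ (form_gt0 _ v_neq0)) -norm_raise.
exact: form_ge0.
Qed.

End UnitaryLowestWeight.

Arguments weight_gap_ge0 {Lam LamF C V rho form v h}.

Theorem lemma17 (Lam LamF : nat) (C : numClosedFieldType) (V : lmodType C)
  (rho : gen -> {linear V -> V}) (form : V -> V -> C) (v : V) (h : gen -> C) :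
  is_rep Lam LamF rho ->
  irreducible Lam LamF rho ->
  lowest_weight Lam LamF rho v h ->
  unitary_form Lam LamF rho form ->
  forall (I_ J_ : seq nat) (l1 l2 : nat),
    valid_seq Lam I_ -> valid_seq Lam J_ ->
    valid_idx LamF l1 -> valid_idx LamF l2 ->
    seq_gt (rcons I_ l1) (rcons J_ l2) ->
    0 <= h (GL l2 l2 J_ J_) - h (GL l1 l1 I_ I_) /\
    0 <= h (GR J_ J_ l2 l2) - h (GR I_ I_ l1 l1).
Proof.
move=> rep _ lw unitary I J l1 l2 vI vJ vl1 vl2 gt_IJ.
split.
- apply: (weight_gap_ge0 rep lw unitary (GL l1 l2 I J) _ _ _ _ _
           (in_Gminus_GL_of_gt gt_IJ)) => /=; rewrite ?vI ?vJ ?vl1 ?vl2 ?eqxx //.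
  by move=> b b' _; rewrite comm_coef_GL.
- apply: (weight_gap_ge0 rep lw unitary (GR I J l1 l2) _ _ _ _ _
           (in_Gminus_GR_of_gt gt_IJ)) => /=; rewrite ?vI ?vJ ?vl1 ?vl2 ?eqxx //.
  by move=> b b' _; rewrite comm_coef_GR.
Qed.
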